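(* Let $M$ be a modular lattice of finite length. Then $S^\delta(M)=\{a\in M: a^{+*}=a\}$, and the maps $x\mapsto x^*$ from $S(M)$ to $S^\delta(M)$ and $a\mapsto a^+$ from $S^\delta(M)$ to $S(M)$ are mutually inverse order isomorphisms (with both sets ordered as in $M$); in particular $S(M)$ and $S^\delta(M)$ are isomorphic lattices.
   Context: $M$ is a modular lattice of finite length (every chain finite) with least element $0$ and greatest element $1$. For $a\in M$: $a^*$ is the join of all elements covering $a$ if $a<1$, and $1^*=1$; $a^+$ is the meet of all elements covered by $a$ if $a>0$, and $0^+=0$; $a^{+*}=(a^+)^*$. An interval $[a,b]$ is \emph{atomistic} if every element of it is a join of atoms of $[a,b]$ (elements covering $a$). The \emph{skeleton} $S(M)$ is the set of least elements of the maximal (under inclusion) atomistic intervals of $M$; the \emph{dual skeleton} $S^\delta(M)$ is the set of greatest elements of the maximal atomistic intervals of $M$. *)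

From mathcomp Require Import all_boot all_order.
From Stdlib Require Import ClassicalEpsilon.
Set Implicit Arguments. Unset Strict Implicit. Unset Printing Implicit Defensive.
Import Order.TTheory.
Local Open Scope order_scope.

Section LatticeDefs.
Context {disp : Order.disp_t} {T : tbLatticeType disp}.

Definition modular_lattice : Prop :=
  forall a b c : T, a <= c -> a `|` (b `&` c) = (a `|` b) `&` c.

Definition is_chain (C : T -> Prop) : Prop :=
  forall x y, C x -> C y -> (x <= y) || (y <= x).

Definition finite_length : Prop :=
  forall C : T -> Prop, is_chain C -> exists s : seq T, forall x, C x -> x \in s.

Definition covers (a b : T) : Prop :=
  a < b /\ forall c, a <= c -> c <= b -> c = a \/ c = b.

Definition is_sup (P : T -> Prop) (s : T) : Prop :=
  (forall x, P x -> x <= s) /\ (forall u, (forall x, P x -> x <= u) -> s <= u).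
Definition is_inf (P : T -> Prop) (s : T) : Prop :=
  (forall x, P x -> s <= x) /\ (forall u, (forall x, P x -> u <= x) -> u <= s).

(* a^* : join of all covers of a (a < 1); 1^* = 1.
   (The join exists in a lattice of finite length; it is chosen by epsilon.) *)
Definition star (a : T) : T :=
  if a == \top then \top
  else epsilon (inhabits \top) (is_sup (covers a)).

(* a^+ : meet of all elements covered by a (a > 0); 0^+ = 0. *)
Definition plus (a : T) : T :=
  if a == \bot then \bot
  else epsilon (inhabits \bot) (is_inf (fun b => covers b a)).

(* [a,b] is atomistic: every element x of [a,b] is the join (in [a,b]) of a
   set S of atoms of [a,b] (elements covering a); the empty join is a. *)
Definition atomistic_interval (a b : T) : Prop :=
  a <= b /\
  forall x, a <= x -> x <= b ->
    exists S : T -> Prop,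
      (forall y, S y -> covers a y /\ y <= b) /\
      is_sup (fun y => y = a \/ S y) x.

Definition max_atomistic (a b : T) : Prop :=
  atomistic_interval a b /\
  forall c d, atomistic_interval c d -> c <= a -> b <= d -> c = a /\ d = b.

Definition skeleton (x : T) : Prop := exists b, max_atomistic x b.
Definition dual_skeleton (a : T) : Prop := exists c, max_atomistic c a.

Definition is_sublattice_order (P : T -> Prop) : Prop :=
  forall x y, P x -> P y ->
    (exists j, P j /\ x <= j /\ y <= j /\ forall u, P u -> x <= u -> y <= u -> j <= u) /\
    (exists m, P m /\ m <= x /\ m <= y /\ forall u, P u -> u <= x -> u <= y -> u <= m).

End LatticeDefs.

From mathcomp Require Import all_boot all_order.
From Stdlib Require Import ClassicalEpsilon Classical.
Import Order.TTheory.
Local Open Scope order_scope.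

(* The transposition principle of modular lattices (if [p `&` y] is covered
   by [p] then [y] is covered by [p `|` y], and dually) drives everything.
   Taking [q] maximal in an interval [[a, b]] with [q `&` y = a], every atom
   of [[a, b]] lies below [q] joined with an atom of [[a, y]].  For [b = a^*]
   this shows that [[a, a^*]] is atomistic; for [[a, b]] atomistic and [y] an
   atom it gives a coatom of [[a, b]] avoiding [y], whence [b^+ <= a].  So
   [[a, b]] is maximal atomistic iff [b = a^*] and [a = b^+]: the skeleton and
   the dual skeleton are the fixed points of the interior operator [x^*+] and
   of the closure operator [a^+*], and [x |-> x^*], [a |-> a^+] are mutually
   inverse monotone maps between them. *)

Section Duality.
Context {disp : Order.disp_t} {T : tbLatticeType disp}.

Lemma covers_dual (x y : T) : @covers _ T^d x y <-> covers y x.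
Proof.
by split=> -[lt hc]; split=> // c h1 h2;
  case: (hc c h2 h1) => ->; [right | left | right | left].
Qed.

Lemma modular_dual : @modular_lattice _ T -> @modular_lattice _ T^d.
Proof.
move=> hm a b c ca; have e := hm c b a ca.
change ((a : T) `&` ((b : T) `|` c) = ((a : T) `&` b) `|` (c : T)).
by rewrite (joinC (b : T)) meetC -e joinC meetC.
Qed.

Lemma finite_length_dual : @finite_length _ T -> @finite_length _ T^d.
Proof. by move=> hf C ch; apply: hf => x y Cx Cy; rewrite orbC; exact: ch. Qed.

End Duality.

Section FiniteLength.
Context {disp : Order.disp_t} {T : tbLatticeType disp}.
Hypothesis hf : @finite_length _ T.

Lemma no_increasing_seq (f : nat -> T) : ~ (forall n, f n < f n.+1).
Proof.
move=> /Order.NatMonotonyTheory.homo_ltn_lt f_lt.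
have f_le := le_mono f_lt.
have [s hs] : exists s : seq T, forall x, (exists n, x = f n) -> x \in s.
  by apply: hf => _ _ [m ->] [n ->]; rewrite !f_le le_total.
have sub : {subset map f (iota 0 (size s).+1) <= s}.
  by move=> x /mapP [n _ ->]; apply: hs; exists n.
have := uniq_leq_size _ sub.
by rewrite (map_inj_uniq (inc_inj f_le)) iota_uniq size_map size_iota ltnn => /(_ isT).
Qed.

Lemma exists_maximal (P : T -> Prop) x0 : P x0 ->
  exists2 m, P m & forall y, P y -> m <= y -> y = m.
Proof.
move=> Px0; apply: NNPP => no_max.
have step m : P m -> exists y, P y /\ m < y.
  move=> Pm; apply: NNPP => no_above; apply: no_max; exists m => // y Py my.
  apply: NNPP => ne; apply: no_above; exists y; split => //.
  by rewrite lt_def my andbT; apply/eqP => e; apply: ne.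
pose next m := epsilon (inhabits m) (fun y => P y /\ m < y).
have next_spec m : P m -> P (next m) /\ m < next m.
  by move=> Pm; exact: epsilon_spec (inhabits m) _ (step m Pm).
pose f n := iter n next x0.
have Pf n : P (f n) by elim: n => //= n IH; exact: (next_spec _ IH).1.
by apply: (@no_increasing_seq f) => n; exact: (next_spec _ (Pf n)).2.
Qed.

Lemma exists_sup (P : T -> Prop) : exists s, is_sup P s.
Proof.
pose finite_join z := exists2 l : seq T, {in l, forall x, P x} & z = \join_(x <- l) x.
have join0 : finite_join \bot by exists [::]; rewrite ?big_nil.
have [_ [l lP ->] lmax] := exists_maximal _ _ join0.
exists (\join_(x <- l) x); split.
- move=> x Px; rewrite -[X in _ <= X](lmax (x `|` \join_(y <- l) y)) ?leUl ?leUr //.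
  by exists (x :: l); rewrite ?big_cons // => y; rewrite inE => /predU1P [-> | /lP].
- by move=> u hu; apply/joinsP_seq => x /lP Px _; exact: hu.
Qed.

End FiniteLength.

Section StarPlus.
Context {disp : Order.disp_t} {T : tbLatticeType disp}.
Hypothesis hf : @finite_length _ T.

Lemma exists_minimal (P : T -> Prop) x0 : P x0 ->
  exists2 m, P m & forall y, P y -> y <= m -> y = m.
Proof. exact: (@exists_maximal _ T^d (finite_length_dual hf) P x0). Qed.

Lemma exists_inf (P : T -> Prop) : exists s, is_inf P s.
Proof. exact: (@exists_sup _ T^d (finite_length_dual hf) P). Qed.

Lemma exists_cover (a : T) : a != \top -> exists p, covers a p.
Proof.
move=> ne; have a_lt1 : a < \top by rewrite lt_neqAle ne lex1.
have [p ap pmin] := exists_minimal (fun y => a < y) _ a_lt1.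
exists p; split => // c ac cp; case: (eqVneq c a) => [|ca]; [by left | right].
by apply: pmin; rewrite // lt_neqAle eq_sym ca.
Qed.

Lemma star_sup (a : T) : a != \top -> is_sup (covers a) (star a).
Proof.
by move=> ne; rewrite /star (negbTE ne); apply: epsilon_spec; exact: exists_sup.
Qed.

Lemma plus_inf (b : T) : b != \bot -> is_inf (covers^~ b) (plus b).
Proof.
by move=> ne; rewrite /plus (negbTE ne); apply: epsilon_spec; exact: exists_inf.
Qed.

Lemma covers_le_star {a r : T} : covers a r -> r <= star a.
Proof.
move=> ar; have ne : a != \top by rewrite lt_eqF // (lt_le_trans ar.1) ?lex1.
exact: (star_sup _ ne).1 _ ar.
Qed.

Lemma star_le (a u : T) : a <= u -> (forall r, covers a r -> r <= u) -> star a <= u.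
Proof.
case: (eqVneq a \top) => [-> | ne] au hu; first by rewrite /star eqxx.
exact: (star_sup _ ne).2.
Qed.

Lemma le_star (a : T) : a <= star a.
Proof.
case: (eqVneq a \top) => [-> | /exists_cover [p ap]]; first by rewrite /star eqxx.
exact: le_trans (ltW ap.1) (covers_le_star ap).
Qed.

End StarPlus.

Section StarPlusDuality.
Context {disp : Order.disp_t} {T : tbLatticeType disp}.
Hypothesis hf : @finite_length _ T.

Lemma star_dual (x : T) : @star _ T^d x = plus x.
Proof.
case: (eqVneq x \bot) => [-> | ne]; first by rewrite /star /plus eqxx.
have [star_lb star_glb] := @star_sup _ T^d (finite_length_dual hf) x ne.
have [plus_lb plus_glb] := plus_inf hf _ ne.
apply/(@le_anti _ T)/andP; split.
- by apply: plus_glb => c /covers_dual; exact: star_lb.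
- by apply: star_glb => c /covers_dual; exact: plus_lb.
Qed.

Lemma plus_dual (x : T) : @plus _ T^d x = star x.
Proof.
case: (eqVneq x \top) => [-> | ne]; first by rewrite /star /plus eqxx.
have [plus_ub plus_lub] := @plus_inf _ T^d (finite_length_dual hf) x ne.
have [star_ub star_lub] := star_sup hf _ ne.
apply/(@le_anti _ T)/andP; split.
- by apply: plus_lub => c /covers_dual; exact: star_ub.
- by apply: star_lub => c /covers_dual; exact: plus_ub.
Qed.

Lemma plus_le (b : T) : plus b <= b.
Proof. by rewrite -star_dual; exact: (@le_star _ T^d (finite_length_dual hf)). Qed.

Lemma plus_le_lower_cover {r b : T} : covers r b -> plus b <= r.
Proof.
move=> /covers_dual rb; rewrite -star_dual.
exact: (@covers_le_star _ T^d (finite_length_dual hf)).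
Qed.

End StarPlusDuality.

Section Transposition.
Context {disp : Order.disp_t} {T : tbLatticeType disp}.
Hypotheses (hm : @modular_lattice _ T) (hf : @finite_length _ T).

Lemma covers_meet_eq {a r c : T} : covers a r -> a <= c -> ~~ (r <= c) -> r `&` c = a.
Proof.
move=> [ar ar_cov] ac nrc; have a_rc : a <= r `&` c by rewrite lexI ac (ltW ar).
case: (ar_cov _ a_rc (leIl r c)) => // rc_r.
by move: nrc; rewrite -rc_r leIr.
Qed.

Lemma covers_join_transpose (p y : T) : covers (p `&` y) p -> covers y (p `|` y).
Proof.
move=> [py_lt py_cov]; split.
  rewrite lt_neqAle leUr andbT eq_sym -leEjoin.
  by apply: contraTN py_lt => py; rewrite meet_l ?ltxx.
move=> c yc cpy.
have ec : c = y `|` (p `&` c) by rewrite hm // joinC meet_r.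
case: (py_cov (p `&` c) (leI2 (lexx p) yc) (leIl p c)) => e; rewrite ec e.
- by left; rewrite join_l ?leIr.
- by right; rewrite joinC.
Qed.

Lemma star_mono (x y : T) : x <= y -> star x <= star y.
Proof.
move=> xy; apply: (star_le hf) => [|p xp]; first exact: le_trans xy (le_star hf y).
case: (boolP (p <= y)) => py; first exact: le_trans py (le_star hf y).
have p_transpose : covers y (p `|` y).
  by apply: covers_join_transpose; rewrite (covers_meet_eq xp xy py).
exact: le_trans (leUl p y) (covers_le_star hf p_transpose).
Qed.

End Transposition.

Section Atomistic.
Context {disp : Order.disp_t} {T : tbLatticeType disp}.
Hypotheses (hm : @modular_lattice _ T) (hf : @finite_length _ T).

Lemma covers_meet_transpose (p y : T) : covers p (p `|` y) -> covers (p `&` y) y.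
Proof.
move=> /(covers_dual (p `|` y) p) h.
exact/(covers_dual y)/(@covers_join_transpose _ T^d (modular_dual hm)).
Qed.

Definition maximal_complement (a b y q : T) : Prop :=
  [/\ q `&` y = a, q <= b &
      forall q', q <= q' -> q' <= b -> q' `&` y = a -> q' = q].

Lemma exists_maximal_complement {a b y : T} :
  a <= b -> a <= y -> exists q, maximal_complement a b y q.
Proof.
move=> ab ay.
have [q [qb qy] qmax] :=
  exists_maximal hf (fun q => q <= b /\ q `&` y = a) a (conj ab (meet_l ay)).
by exists q; split=> // q' qq' q'b q'y; apply: qmax.
Qed.

Lemma maximal_complement_atom {a b y q r : T} :
  maximal_complement a b y q -> covers a r -> r <= b ->
  r <= q \/ exists2 v, covers a v & v <= y /\ r <= q `|` v.
Proof.
move=> [qy qb qmax] ar rb.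
have aq : a <= q by rewrite -qy leIl.
have ay : a <= y by rewrite -qy leIr.
case: (boolP (r <= q)) => rq; [by left | right].
have rq_covers : covers q (r `|` q).
  by apply: (covers_join_transpose hm); rewrite (covers_meet_eq ar aq rq).
(* Either [v] is trivial, contradicting the maximality of [q], or it is an atom
   of [a, y] with [q `|` v = q `|` r]. *)
set v := (r `|` q) `&` y.
have qv_le : q `|` v <= r `|` q by rewrite leUx leUr leIl.
case: (rq_covers.2 _ (leUl q v) qv_le) => [qv_q | qv_rq].
- have vq : v <= q by rewrite -qv_q leUr.
  have va : v = a.
    apply/le_anti/andP; split; first by rewrite -qy lexI vq leIr.
    by rewrite lexI ay (le_trans aq (leUr q r)).
  have rqb : r `|` q <= b by rewrite leUx rb qb.
  have rqq := qmax _ (leUr q r) rqb va.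
  by move: rq; rewrite -rqq leUl.
- exists v; last by split; [exact: leIr | rewrite qv_rq leUl].
  have qva : q `&` v = a by rewrite meetA (meet_l (leUr q r)) qy.
  by rewrite -qva; apply: covers_meet_transpose; rewrite qv_rq.
Qed.

Lemma atomistic_le {a b x u : T} : atomistic_interval a b ->
  a <= x -> x <= b -> a <= u -> (forall r, covers a r -> r <= x -> r <= u) -> x <= u.
Proof.
move=> [_ hab] ax xb au hu; have [S [hS [S_ub S_lub]]] := hab x ax xb.
apply: S_lub => w [-> // | Sw].
exact: hu (hS w Sw).1 (S_ub w (or_intror Sw)).
Qed.

Lemma star_interval_le_of_atoms {x y z : T} : x <= z -> z <= y -> y <= star x ->
  (forall r, covers x r -> r <= y -> r <= z) -> y <= z.
Proof.
move=> xz zy y_star hz.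
have [q [qy q_star qmax]] :=
  exists_maximal_complement (le_star hf x) (le_trans xz zy).
have star_qz : star x <= q `|` z.
  apply: (star_le hf) => [|r xr]; first exact: le_trans xz (leUr _ _).
  have [rq | [v xv [vy rqv]]] :=
    maximal_complement_atom (And3 qy q_star qmax) xr (covers_le_star hf xr).
  - exact: le_trans rq (leUl _ _).
  - exact: le_trans rqv (leU2 (lexx q) (hz v xv vy)).
(* [q] is a complement of [y] in [x, star x], so [y = (z `|` q) `&` y = z]. *)
have := hm z q y zy; rewrite qy (join_l xz) => ->.
by rewrite lexI lexx andbT joinC (le_trans y_star star_qz).
Qed.

Lemma star_atomistic (x : T) : atomistic_interval x (star x).
Proof.
split=> [|y xy y_star]; first exact: le_star.
exists (fun r => covers x r /\ r <= y); split.
  by move=> r [xr ry]; split=> //; exact: le_trans ry y_star.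
split=> [w [-> // | [_ wy //]] | u hu].
have xu := hu x (or_introl erefl).
have x_yu : x <= y `&` u by rewrite lexI xy xu.
have atoms_yu r : covers x r -> r <= y -> r <= y `&` u.
  by move=> xr ry; rewrite lexI ry hu //; right.
exact: le_trans (star_interval_le_of_atoms x_yu (leIl _ _) y_star atoms_yu) (leIr _ _).
Qed.

Lemma atomistic_le_star {a b : T} : atomistic_interval a b -> b <= star a.
Proof.
move=> hab; apply: (atomistic_le hab hab.1 (lexx b) (le_star hf a)) => r ar _.
exact: (covers_le_star hf ar).
Qed.

Lemma atomistic_avoiding_coatom {a b p : T} : atomistic_interval a b ->
  covers a p -> p <= b -> exists2 q, covers q b & a <= q /\ ~~ (p <= q).
Proof.
move=> hab ap pb.
have [q hq] := exists_maximal_complement hab.1 (ltW ap.1).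
have [qp qb _] := hq.
have aq : a <= q by rewrite -qp leIl.
have npq : ~~ (p <= q) by apply: contraTN ap.1 => pq; rewrite -qp meet_r ?ltxx.
have b_pq : b <= p `|` q.
  apply: (atomistic_le hab hab.1 (lexx b) (le_trans aq (leUr _ _))) => r ar rb.
  have [rq | [v av [vp rqv]]] := maximal_complement_atom hq ar rb.
    exact: le_trans rq (leUr _ _).
  have vp_eq : v = p.
    by case: (ap.2 v (ltW av.1) vp) => // va; move: av.1; rewrite va ltxx.
  by rewrite joinC -vp_eq.
exists q; last by split.
have -> : b = p `|` q by apply/le_anti; rewrite b_pq leUx pb qb.
by apply: (covers_join_transpose hm); rewrite meetC qp.
Qed.

Lemma atomistic_plus_le {a b : T} : atomistic_interval a b -> plus b <= a.
Proof.
move=> hab; have pb := plus_le hf b.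
suff : a `|` plus b <= a by apply: le_trans (leUr _ _).
have ab_b : a `|` plus b <= b by rewrite leUx hab.1 pb.
apply: (atomistic_le hab (leUl _ _) ab_b (lexx a)) => r ar r_le.
have [q qb [aq nrq]] :=
  atomistic_avoiding_coatom hab ar (le_trans r_le ab_b).
by move: nrq; rewrite (le_trans r_le) // leUx aq (plus_le_lower_cover hf qb).
Qed.

Lemma plus_star_le (x : T) : plus (star x) <= x.
Proof. exact: atomistic_plus_le (star_atomistic x). Qed.

End Atomistic.

Section FixpointSublattices.
Context {disp : Order.disp_t} {T : tbLatticeType disp}.

Lemma sublattice_order_dual (P : T -> Prop) :
  @is_sublattice_order _ T^d P -> is_sublattice_order P.
Proof.
by move=> hP x y Px Py; have [[j hj] [m hm]] := hP x y Px Py; split; [exists m | exists j].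
Qed.

Lemma interior_fixpoints_sublattice (P : T -> Prop) (k : T -> T) :
  {homo k : x y / x <= y} -> (forall x, k x <= x) -> (forall x, k (k x) = k x) ->
  (forall x, P x <-> k x = x) -> is_sublattice_order P.
Proof.
move=> k_mono k_le k_idem hP x y /hP kx /hP ky; split.
- exists (x `|` y); split; last first.
    by split; [exact: leUl | split; [exact: leUr | move=> u _ xu yu; rewrite leUx xu yu]].
  apply/hP/le_anti; rewrite k_le leUx.
  by rewrite -{1}kx -{2}ky !k_mono ?leUl ?leUr.
- exists (k (x `&` y)); split; first by apply/hP; rewrite k_idem.
  split; first exact: le_trans (k_le _) (leIl _ _).
  split; first exact: le_trans (k_le _) (leIr _ _).
  by move=> u /hP ku ux uy; rewrite -ku k_mono // lexI ux uy.
Qed.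

End FixpointSublattices.

Section Skeleton.
Context {disp : Order.disp_t} {T : tbLatticeType disp}.
Hypotheses (hm : @modular_lattice _ T) (hf : @finite_length _ T).

Lemma closure_fixpoints_sublattice (P : T -> Prop) (k : T -> T) :
  {homo k : x y / x <= y} -> (forall x, x <= k x) -> (forall x, k (k x) = k x) ->
  (forall x, P x <-> k x = x) -> is_sublattice_order P.
Proof.
move=> k_mono le_k k_idem hP; apply: sublattice_order_dual.
by apply: (@interior_fixpoints_sublattice _ T^d P k) => // x y /k_mono.
Qed.

Lemma plus_mono (x y : T) : x <= y -> plus x <= plus y.
Proof.
move=> xy; have := @star_mono _ T^d (modular_dual hm) (finite_length_dual hf) y x xy.
by rewrite !(star_dual hf).
Qed.

Lemma le_star_plus (b : T) : b <= star (plus b).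
Proof.
have := @plus_star_le _ T^d (modular_dual hm) (finite_length_dual hf) b.
by rewrite (star_dual hf) (plus_dual hf).
Qed.

Lemma max_atomistic_iff (a b : T) : max_atomistic a b <-> b = star a /\ a = plus b.
Proof.
split=> [[hab ab_max] | [b_star a_plus]].
- have [_ b_star] :=
    ab_max a _ (star_atomistic hm hf a) (lexx a) (atomistic_le_star hf hab).
  have [a_plus _] := ab_max _ _ (star_atomistic hm hf (plus b))
    (atomistic_plus_le hm hf hab) (le_star_plus b).
  by split.
- split=> [|c d cd ca bd]; first by rewrite b_star; exact: star_atomistic.
  have db : d <= b.
    by rewrite b_star (le_trans (atomistic_le_star hf cd) (star_mono hm hf _ _ ca)).
  have db_eq : d = b by apply/le_anti; rewrite db bd.
  split=> //; apply/le_anti; rewrite ca /= a_plus -db_eq.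
  exact: (atomistic_plus_le hm hf cd).
Qed.

Lemma skeletonE (x : T) : skeleton x <-> plus (star x) = x.
Proof.
split=> [[b /max_atomistic_iff [b_eq x_eq]] | x_eq]; first by rewrite {2}x_eq b_eq.
by exists (star x); apply/max_atomistic_iff.
Qed.

Lemma dual_skeletonE (a : T) : dual_skeleton a <-> star (plus a) = a.
Proof.
split=> [[c /max_atomistic_iff [a_eq c_eq]] | a_eq]; first by rewrite {2}a_eq c_eq.
by exists (plus a); apply/max_atomistic_iff.
Qed.

Lemma plus_star_idem (x : T) : plus (star (plus (star x))) = plus (star x).
Proof.
congr plus; apply/le_anti; rewrite le_star_plus andbT.
exact: star_mono hm hf _ _ (plus_star_le hm hf x).
Qed.

Lemma star_plus_idem (a : T) : star (plus (star (plus a))) = star (plus a).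
Proof.
congr star; apply/le_anti; rewrite plus_star_le // andTb.
exact: plus_mono _ _ (le_star_plus a).
Qed.

End Skeleton.

Theorem theorem6p4 (disp : Order.disp_t) (T : tbLatticeType disp) :
  @modular_lattice disp T -> @finite_length disp T ->
  (forall a : T, dual_skeleton a <-> star (plus a) = a) /\
  (forall x : T, skeleton x -> dual_skeleton (star x)) /\
  (forall a : T, dual_skeleton a -> skeleton (plus a)) /\
  (forall x : T, skeleton x -> plus (star x) = x) /\
  (forall a : T, dual_skeleton a -> star (plus a) = a) /\
  (forall x y : T, skeleton x -> skeleton y -> x <= y -> star x <= star y) /\
  (forall a b : T, dual_skeleton a -> dual_skeleton b -> a <= b -> plus a <= plus b) /\
  is_sublattice_order (@skeleton disp T) /\ is_sublattice_order (@dual_skeleton disp T).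
Proof.
move=> hm hf; have skel := skeletonE hm hf; have dskel := dual_skeletonE hm hf.
have mono (x y : T) : x <= y -> plus (star x) <= plus (star y).
  by move=> xy; apply: (plus_mono hm hf _ _ (star_mono hm hf _ _ xy)).
have dmono (x y : T) : x <= y -> star (plus x) <= star (plus y).
  by move=> xy; apply: (star_mono hm hf _ _ (plus_mono hm hf _ _ xy)).
split; first exact: dskel.
split; first by move=> x /skel x_eq; apply/dskel; rewrite x_eq.
split; first by move=> a /dskel a_eq; apply/skel; rewrite a_eq.
split; first by move=> x /skel.
split; first by move=> a /dskel.
split; first by move=> x y _ _; exact: star_mono.
split; first by move=> a b _ _; exact: plus_mono.
split.
- exact: interior_fixpoints_sublattice mono
    (plus_star_le hm hf) (plus_star_idem hm hf) skel.
- exact: closure_fixpoints_sublattice dmono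
    (le_star_plus hm hf) (star_plus_idem hm hf) dskel.
Qed.
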